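(* Let $V$ be a finite set of voters and let $O_1,O_2,\dots,O_k$ be a sequence of delegation operations with pairwise distinct times $t_1<t_2<\dots<t_k$, where each $O_i$ is a pair $(v_i,d_i)$ with $v_i\in V$ and $d_i\in V\cup\{\bot\}$ ($d_i=\bot$ meaning undelegation). For a time $t$, the state graph $G_t$ is the directed graph on $V$ containing, for each voter $v$ having at least one operation at time $<t$, the edge $v\to d$ where $(v,d)$ is the latest such operation, if $d\neq\bot$. The final graph $G$ is $G_{\infty}$; each edge of $G$ carries the time of the operation that produced it. Apply the following deletion procedure to $G$: while $G$ contains a directed cycle, choose a directed cycle and delete its edge with the latest time. Suppose $O_i=(v_i,d_i)$ with $d_i\neq\bot$ is the last operation of voter $v_i$ (so $v_i\to d_i$ is an edge of $G$), and suppose that the graph $G_{t_i}$ together with the edge $v_i\to d_i$ contains no directed cycle through $v_i\to d_i$. Then the edge $v_i\to d_i$ is never deleted by the deletion procedure.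
   Context: Each voter appoints at most one delegate at any time, so every state graph has out-degree at most one at every vertex. The hypothesis on $O_i$ expresses that the voter's delegation, checked against the current delegate graph at the moment it was submitted, did not create a cycle. *)

From HB Require Import structures.
From mathcomp Require Import all_boot all_order.
Set Implicit Arguments. Unset Strict Implicit. Unset Printing Implicit Defensive.

(* Operations: a sequence ops of pairs (v, d) with d : option V (None = bot).
   The time of the j-th operation is its index j (times are pairwise distinct
   and increasing, only their order matters). *)
Section Deleg.
Variable V : finType.
Definition op := (V * option V)%type.

(* latest delegation of v among operations with time < i (None if none or undelegated) *)
Definition state (ops : seq op) (i : nat) (v : V) : option V :=
  last None [seq o.2 | o <- take i ops & o.1 == v].

Definition graph_at (ops : seq op) (i : nat) : {set V * V} :=
  [set e : V * V | state ops i e.1 == Some e.2].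

Definition final_graph (ops : seq op) : {set V * V} := graph_at ops (size ops).

Definition edge_time (ops : seq op) (e : V * V) : nat :=
  \max_(j < size ops | (nth (e.1, None) ops j).1 == e.1) j.

Definition is_dcycle (E : {set V * V}) (c : seq V) : bool :=
  [&& c != [::], uniq c & cycle (fun x y => (x, y) \in E) c].

Definition del_step (ops : seq op) (E E' : {set V * V}) : Prop :=
  exists c : seq V, is_dcycle E c /\
  exists2 u, u \in c &
    (forall x, x \in c -> edge_time ops (x, next c x) <= edge_time ops (u, next c u)) /\
    E' = E :\ (u, next c u).

Inductive del_reach (ops : seq op) (E : {set V * V}) : {set V * V} -> Prop :=
  | del_refl : del_reach ops E E
  | del_next E1 E2 : del_reach ops E E1 -> del_step ops E1 E2 -> del_reach ops E E2.
End Deleg.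

From mathcomp Require Import all_boot all_order.

Set Implicit Arguments.
Unset Strict Implicit.
Unset Printing Implicit Defensive.

(* If the deletion procedure removes the edge v -> d, it is the latest edge of a
   directed cycle of the final graph G.  Every other edge x -> y of that cycle is
   then older than v -> d, i.e. x issued no operation from time t_i on, so
   x -> y is already an edge of G_{t_i}; the cycle thus lies in G_{t_i} plus
   v -> d, which the hypothesis on O_i forbids. *)

Section Delegation.
Variables (V : finType) (ops : seq (V * option V)).

Lemma state_after_nth x0 i :
  i < size ops -> state ops i.+1 (nth x0 ops i).1 = (nth x0 ops i).2.
Proof.
move=> lt_i_ops.
by rewrite /state (take_nth x0 lt_i_ops) filter_rcons eqxx map_rcons last_rcons.
Qed.

Lemma state_silent x0 i x :
  (forall k, i <= k < size ops -> (nth x0 ops k).1 != x) ->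
  state ops i x = state ops (size ops) x.
Proof.
move=> silent; rewrite /state take_size -{2}(cat_take_drop i ops) filter_cat.
suff -> : [seq o <- drop i ops | o.1 == x] = [::] by rewrite cats0.
apply/eqP; rewrite -[_ == [::]]negbK -has_filter -all_predC.
apply/(all_nthP x0) => k; rewrite size_drop ltn_subRL => lt_k /=.
by rewrite nth_drop silent // leq_addr.
Qed.

Lemma final_graph_last_op x0 i v d :
  i < size ops -> nth x0 ops i = (v, Some d) ->
  (forall j, i < j < size ops -> (nth x0 ops j).1 != v) ->
  (v, d) \in final_graph ops.
Proof.
move=> lt_i_ops op_i last_op; rewrite inE /= -(@state_silent x0 i.+1).
  by have := state_after_nth x0 lt_i_ops; rewrite op_i => ->.
by move=> k /andP[lt_ik lt_k]; rewrite last_op ?lt_ik.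
Qed.

Lemma leq_edge_time x0 k x y :
  k < size ops -> (nth x0 ops k).1 = x -> k <= edge_time ops (x, y).
Proof.
move=> lt_k op_k.
apply: (@leq_bigmax_cond _ _ (fun j : 'I_(size ops) => nat_of_ord j) (Ordinal lt_k)) => /=.
by rewrite (set_nth_default x0) // op_k.
Qed.

Lemma edge_time_last_op x0 i x y :
  (forall j, i < j < size ops -> (nth x0 ops j).1 != x) ->
  edge_time ops (x, y) <= i.
Proof.
move=> last_op; apply/bigmax_leqP => j /= op_j; rewrite leqNgt.
apply/negP => lt_ij; move: (last_op j); rewrite lt_ij ltn_ord.
by rewrite (set_nth_default (x, None)) ?ltn_ord // op_j => /(_ isT).
Qed.

Lemma graph_at_final_edge x0 i x y :
  i < size ops -> (nth x0 ops i).1 != x ->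
  (x, y) \in final_graph ops -> edge_time ops (x, y) <= i ->
  (x, y) \in graph_at ops i.
Proof.
move=> lt_i_ops op_i_x xy_final time_xy.
rewrite inE /= (@state_silent x0 i); first by rewrite inE in xy_final.
move=> k /andP[le_ik lt_k].
apply: contra op_i_x => /eqP op_k.
have le_ki : k <= i := leq_trans (leq_edge_time y lt_k op_k) time_xy.
by rewrite -op_k; have /eqP <- : k == i by rewrite eqn_leq le_ki.
Qed.

Lemma dcycle_sub_edges (E F : {set V * V}) c :
  is_dcycle E c -> {in c, forall x, (x, next c x) \in F} -> is_dcycle F c.
Proof.
by case/and3P=> c_nil c_uniq _ c_F; rewrite /is_dcycle c_nil c_uniq cycle_from_next.
Qed.

Lemma del_reach_sub (G E : {set V * V}) : del_reach ops G E -> E \subset G.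
Proof.
elim=> [|E1 E2 _ sub_E1G [c [_ [? _ [_ ->]]]]]; first exact: subxx.
exact: subset_trans (subD1set _ _) sub_E1G.
Qed.

Lemma del_reach_mem (G : {set V * V}) u w :
  (u, w) \in G ->
  (forall c, is_dcycle G c -> u \in c -> next c u = w ->
     has (fun x => edge_time ops (u, w) < edge_time ops (x, next c x)) c) ->
  forall E, del_reach ops G E -> (u, w) \in E.
Proof.
move=> uw_G younger E reach; elim: reach => // E1 E2 reach1 uw_E1.
case=> c [dc [y y_c [latest ->]]]; rewrite !inE uw_E1 andbT.
apply/negP => /eqP [uy wy]; subst y w.
have dcG : is_dcycle G c.
  apply: (dcycle_sub_edges dc) => x x_c.
  by apply: (subsetP (del_reach_sub reach1)); case/and3P: dc => _ _ /next_cycle; apply.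
have /hasP [x x_c] := younger c dcG y_c erefl.
by rewrite ltnNge latest.
Qed.

End Delegation.

Theorem mainTheorem2 (V : finType) (ops : seq (V * option V)) (i : nat)
    (v d : V) :
  i < size ops ->
  nth (v, None) ops i = (v, Some d) ->
  (* O_i is the last operation of v *)
  (forall j, i < j < size ops -> (nth (v, None) ops j).1 != v) ->
  (* G_{t_i} plus the edge v -> d has no directed cycle through v -> d *)
  (forall c : seq V, is_dcycle (graph_at ops i :|: [set (v, d)]) c ->
     v \in c -> next c v != d) ->
  (* the edge is never deleted *)
  forall E, del_reach ops (final_graph ops) E -> (v, d) \in E.
Proof.
move=> lt_i_ops op_i last_op no_cycle.
apply: del_reach_mem (final_graph_last_op lt_i_ops op_i last_op) _.
move=> c dc v_c next_v; apply: contraT => /hasPn older.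
have time_vd : edge_time ops (v, d) <= i := edge_time_last_op d last_op.
have cycle_i : is_dcycle (graph_at ops i :|: [set (v, d)]) c.
  apply: (dcycle_sub_edges dc) => x x_c; rewrite in_setU in_set1.
  have [-> | ne_xv] := eqVneq x v; first by rewrite next_v eqxx orbT.
  apply/orP; left; apply: (graph_at_final_edge (x0 := (v, None)) lt_i_ops).
  - by rewrite op_i eq_sym.
  - by case/and3P: dc => _ _ /next_cycle; apply.
  - by apply: leq_trans time_vd; rewrite leqNgt older.
by move: (no_cycle c cycle_i v_c); rewrite next_v eqxx.
Qed.
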